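(* Consider a unifilar state channel with state update $z_i=f_{\mathsf z}(z_{i-1},y_i,x_i)$ and output $y_i=f_{\mathsf y}(z_{i-1},x_i,k_i)$, where $f_{\mathsf y}$ and $f_{\mathsf z}$ are Lipschitz with respect to the $\ell^1$ norm with constants $M_y$ and $M_z$ respectively, satisfying $M_z(M_y+1)<1$. Let $n\in\mathbb N$ and let $x^{1,n},x^{2,n}$ be two input sequences with $\max_{t=1,\dots,n}\|x^1_t-x^2_t\|_1\le\eta$, and let $y^{1,n},y^{2,n}$ be the corresponding outputs, generated with the same noise realization $k^n$ and the same initial state. Then $$\max_{t=1,\dots,n}\|y^1_t-y^2_t\|_1\le\frac{M_y\big(2-M_z(M_y+1)\big)}{1-M_z(M_y+1)}\,\eta.$$ *)

From HB Require Import structures.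
From mathcomp Require Import all_boot all_order all_algebra.
Set Implicit Arguments. Unset Strict Implicit. Unset Printing Implicit Defensive.
Import Order.TTheory GRing.Theory Num.Theory.
Local Open Scope ring_scope.

Definition norm1 {R : numDomainType} {d : nat} (v : 'rV[R]_d) : R :=
  \sum_(i < d) `|v 0 i|.

(* Lipschitz w.r.t. the ell^1 norm on the product space R^a x R^b x R^c
   (the ell^1 norm of the concatenated vector is the sum of the ell^1 norms). *)
Definition lipschitz3 {R : numDomainType} {a b c e : nat}
  (f : 'rV[R]_a -> 'rV[R]_b -> 'rV[R]_c -> 'rV[R]_e) (M : R) : Prop :=
  forall u u' v v' w w',
    norm1 (f u v w - f u' v' w') <= M * (norm1 (u - u') + norm1 (v - v') + norm1 (w - w')).

(* Unifilar state channel: state z_i = fz (z_{i-1}) (y_i) (x_i),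
   output y_i = fy (z_{i-1}) (x_i) (k_i); time indices start at 1, z_0 = initial state. *)
Fixpoint chan_state {R : numDomainType} {dz dy dx dk : nat}
  (fy : 'rV[R]_dz -> 'rV[R]_dx -> 'rV[R]_dk -> 'rV[R]_dy)
  (fz : 'rV[R]_dz -> 'rV[R]_dy -> 'rV[R]_dx -> 'rV[R]_dz)
  (z0 : 'rV[R]_dz) (x : nat -> 'rV[R]_dx) (k : nat -> 'rV[R]_dk) (i : nat) : 'rV[R]_dz :=
  match i with
  | 0 => z0
  | j.+1 => let zj := chan_state fy fz z0 x k j in
            fz zj (fy zj (x j.+1) (k j.+1)) (x j.+1)
  end.

Definition chan_out {R : numDomainType} {dz dy dx dk : nat}
  (fy : 'rV[R]_dz -> 'rV[R]_dx -> 'rV[R]_dk -> 'rV[R]_dy)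
  (fz : 'rV[R]_dz -> 'rV[R]_dy -> 'rV[R]_dx -> 'rV[R]_dz)
  (z0 : 'rV[R]_dz) (x : nat -> 'rV[R]_dx) (k : nat -> 'rV[R]_dk) (i : nat) : 'rV[R]_dy :=
  fy (chan_state fy fz z0 x k i.-1) (x i) (k i).

From HB Require Import structures.
From mathcomp Require Import all_boot all_order all_algebra.
From mathcomp Require Import ring.

Set Implicit Arguments.
Unset Strict Implicit.
Unset Printing Implicit Defensive.

Import Order.TTheory GRing.Theory Num.Theory.
Local Open Scope ring_scope.

(* With the same noise and initial state, the state deviations [D i] obey
   [D i.+1 <= a * (D i + eta)] with [a = Mz * (My + 1) < 1], so they never
   exceed the fixed point [a * eta / (1 - a)] of this contraction. The output
   deviation at time [t] is at most [My * (D t.-1 + eta) <= My * eta / (1 - a)],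
   which is the stated bound minus [My * eta]. *)

Lemma norm1_ge0 (R : numDomainType) d (v : 'rV[R]_d) : 0 <= norm1 v.
Proof. exact: sumr_ge0. Qed.

Lemma norm1_subrr (R : numDomainType) d (v : 'rV[R]_d) : norm1 (v - v) = 0.
Proof. by rewrite /norm1 big1 // => i _; rewrite subrr mxE normr0. Qed.

Lemma contraction_le_fixpoint (R : realFieldType) (a e : R) (d : nat -> R) (n : nat) :
  0 <= a -> a < 1 -> d 0%N <= a * e / (1 - a) ->
  (forall i, (i < n)%N -> d i.+1 <= a * (d i + e)) ->
  forall i, (i <= n)%N -> d i <= a * e / (1 - a).
Proof.
move=> a_ge0 a_lt1 d0 d_step; set c := a * e / (1 - a).
have c_fix : a * (c + e) = c.
  by rewrite /c; field; rewrite subr_eq0 gt_eqF.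
elim=> [//|i IH] lt_i_n.
apply: le_trans (d_step i lt_i_n) _; rewrite -[leRHS]c_fix.
by rewrite ler_wpM2l // lerD2r IH // ltnW.
Qed.

Section UnifilarChannel.

Variables (R : realFieldType) (dz dy dx dk : nat).
Variable fy : 'rV[R]_dz -> 'rV[R]_dx -> 'rV[R]_dk -> 'rV[R]_dy.
Variable fz : 'rV[R]_dz -> 'rV[R]_dy -> 'rV[R]_dx -> 'rV[R]_dz.
Variables (My Mz : R).
Hypothesis Mz_ge0 : 0 <= Mz.
Hypotheses (fy_lip : lipschitz3 fy My) (fz_lip : lipschitz3 fz Mz).
Variables (z0 : 'rV[R]_dz) (x1 x2 : nat -> 'rV[R]_dx) (k : nat -> 'rV[R]_dk).

Let z1 := chan_state fy fz z0 x1 k.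
Let z2 := chan_state fy fz z0 x2 k.

Lemma chan_out_dev (t : nat) :
  norm1 (chan_out fy fz z0 x1 k t - chan_out fy fz z0 x2 k t)
    <= My * (norm1 (z1 t.-1 - z2 t.-1) + norm1 (x1 t - x2 t)).
Proof. by apply: le_trans (fy_lip _ _ _ _ _ _) _; rewrite norm1_subrr addr0. Qed.

Lemma chan_state_dev_step (i : nat) :
  norm1 (z1 i.+1 - z2 i.+1)
    <= Mz * (My + 1) * (norm1 (z1 i - z2 i) + norm1 (x1 i.+1 - x2 i.+1)).
Proof.
apply: le_trans (fz_lip _ _ _ _ _ _) _.
set D := norm1 (z1 i - z2 i); set X := norm1 (x1 i.+1 - x2 i.+1).
(* [chan_state _ i.+1] feeds the output [chan_out _ i.+1] back into [fz]. *)
have out_dev : norm1 (chan_out fy fz z0 x1 k i.+1 - chan_out fy fz z0 x2 k i.+1)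
    <= My * (D + X) := chan_out_dev i.+1.
have -> : Mz * (My + 1) * (D + X) = Mz * (D + My * (D + X) + X) by ring.
by rewrite ler_wpM2l // lerD2r lerD2l.
Qed.

End UnifilarChannel.

Theorem lemma6 (R : realFieldType) (dz dy dx dk : nat)
  (fy : 'rV[R]_dz -> 'rV[R]_dx -> 'rV[R]_dk -> 'rV[R]_dy)
  (fz : 'rV[R]_dz -> 'rV[R]_dy -> 'rV[R]_dx -> 'rV[R]_dz)
  (My Mz : R)
  (hMy : 0 <= My) (hMz : 0 <= Mz)
  (hfy : lipschitz3 fy My) (hfz : lipschitz3 fz Mz)
  (hM : Mz * (My + 1) < 1)
  (n : nat) (eta : R) (z0 : 'rV[R]_dz)
  (x1 x2 : nat -> 'rV[R]_dx) (k : nat -> 'rV[R]_dk)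
  (hx : forall t : nat, (1 <= t <= n)%N -> norm1 (x1 t - x2 t) <= eta) :
  forall t : nat, (1 <= t <= n)%N ->
    norm1 (chan_out fy fz z0 x1 k t - chan_out fy fz z0 x2 k t)
      <= My * (2 - Mz * (My + 1)) / (1 - Mz * (My + 1)) * eta.
Proof.
move=> t t_in.
have eta_ge0 : 0 <= eta by apply: le_trans (hx t t_in); apply: norm1_ge0.
set a := Mz * (My + 1) in hM *.
have a_ge0 : 0 <= a by rewrite mulr_ge0 ?addr_ge0.
set D := fun i => norm1 (chan_state fy fz z0 x1 k i - chan_state fy fz z0 x2 k i).
have D_le : forall i, (i <= n)%N -> D i <= a * eta / (1 - a).
  apply: contraction_le_fixpoint => //.
    by rewrite /D norm1_subrr; apply: divr_ge0; [rewrite mulr_ge0 | rewrite subr_ge0 ltW].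
  move=> i lt_i_n; apply: le_trans (chan_state_dev_step hMz hfy hfz z0 x1 x2 k i) _.
  by rewrite ler_wpM2l // lerD2l hx.
apply: le_trans (chan_out_dev fz hfy _ _ _ _ t) _.
have -> : My * (2 - a) / (1 - a) * eta = My * (a * eta / (1 - a) + eta) + My * eta.
  by field; rewrite subr_eq0 gt_eqF.
rewrite -[leLHS]addr0 lerD ?mulr_ge0 // ler_wpM2l // lerD ?hx //.
by rewrite D_le // (leq_trans (leq_pred t)) // (andP t_in).2.
Qed.
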